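(* Let $F$ be a finite field of characteristic $3$. Let $k\ge 0$ be an integer, $m=3k+1$, and $t$ an integer with $t^3\equiv 1\pmod m$ and $\gcd(m,t-1)=1$. Let $G=T_{3m}=\langle x,y\mid x^m=y^3=1,\ y^{-1}xy=x^t\rangle$ (of order $3m$), $FG$ its group algebra, and $H=\langle x\rangle$. Then $\Delta(G,H)$ is a semisimple ring.
   Context: $\Delta(G,H)$ is the ideal of $FG$ generated by $\{h-1\mid h\in H\}$, regarded as a ring with the multiplication of $FG$. *)

From HB Require Import structures.
From mathcomp Require Import all_boot all_order all_algebra all_fingroup.
Set Implicit Arguments. Unset Strict Implicit. Unset Printing Implicit Defensive.
Import GRing.Theory.
Local Open Scope ring_scope.

(* Group algebra F[G] of a subgroup G of a finite group type gT:
   elements are functions gT -> F supported on G, with convolution product. *)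
Section GroupAlgebra.
Variables (F : fieldType) (gT : finGroupType).

Definition in_FG (G : {set gT}) (a : {ffun gT -> F}) : Prop :=
  forall g, g \notin G -> a g = 0.

Definition ga_mul (G : {set gT}) (a b : {ffun gT -> F}) : {ffun gT -> F} :=
  [ffun g => \sum_(h in G) a h * b (h^-1 * g)%g].

Definition ga_elt (g : gT) : {ffun gT -> F} := [ffun z => (z == g)%:R].

End GroupAlgebra.

(* Generic ring-theoretic notions for a (possibly non-unital) ring given as a
   subset R of an additive group V, closed under a multiplication mul. *)
Section RingNotions.
Variable V : zmodType.

Definition is_ideal_of (R : V -> Prop) (mul : V -> V -> V) (I : V -> Prop) : Prop :=
  [/\ (forall a, I a -> R a), I 0,
      (forall a b, I a -> I b -> I (a - b)) &
      (forall r a, R r -> I a -> I (mul r a) /\ I (mul a r))].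

(* prodn mul f n = f 0 * f 1 * ... * f n *)
Fixpoint prodn (mul : V -> V -> V) (f : nat -> V) (n : nat) : V :=
  if n is n'.+1 then mul (prodn mul f n') (f n) else f 0%N.

Definition nilpotent_set (mul : V -> V -> V) (I : V -> Prop) : Prop :=
  exists n, forall f : nat -> V, (forall i, I (f i)) -> prodn mul f n = 0.

(* a (finite, hence Artinian) ring is semisimple iff it has no nonzero
   nilpotent two-sided ideal (i.e. its Jacobson radical vanishes) *)
Definition semisimple_ring (R : V -> Prop) (mul : V -> V -> V) : Prop :=
  forall I, is_ideal_of R mul I -> nilpotent_set mul I -> forall a, I a -> a = 0.

End RingNotions.

Definition Delta (F : fieldType) (gT : finGroupType) (G H : {set gT})
  (a : {ffun gT -> F}) : Prop :=
  forall I, is_ideal_of (@in_FG F gT G) (@ga_mul F gT G) I ->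
    (forall h, h \in H -> I (ga_elt F h - ga_elt F 1%g)) -> I a.

(* Write e for the sum of the elements of H. As H is normal, e is central, so every element
   of Delta(G,H) is annihilated by e; when |H| is invertible in F, 1 - e/|H| lies in Delta(G,H)
   and is an identity for those elements. Hence a nilpotent ideal I of the ring Delta(G,H) is
   stable under multiplication by group elements, and for a in I and g in G the average
   c = sum_(h in H) h (g^-1 a) h^-1 lies in I. If no g outside H centralizes a nontrivial
   element of H, then h |-> [h, g] permutes H, which turns c(g') for g' outside H into the
   coefficient of g' in (g^-1 a) e = 0; so c is a nilpotent element of F[H]. When F[H] is
   reduced, c = 0, and c(1) = |H| a(g) gives a = 0.
   For T_3m, conjugation by y fixes no nontrivial power of x since gcd(m, t - 1) = 1, and
   F[<x>] is reduced because, raising to a large 3-power q, (sum c_i x^i)^q = sum c_i^q x^(iq)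
   and x |-> x^q permutes <x> as 3 does not divide m. *)

From HB Require Import structures.
From mathcomp Require Import all_boot all_order all_algebra all_fingroup.
From mathcomp Require Import cyclic ring.
Set Implicit Arguments. Unset Strict Implicit. Unset Printing Implicit Defensive.
Import GRing.Theory.
Local Open Scope ring_scope.

Lemma subr_closed_sum (V : zmodType) (I : V -> Prop) (J : Type) (r : seq J) (P : pred J)
    (A : J -> V) :
  I 0 -> (forall a b, I a -> I b -> I (a - b)) ->
  (forall j, P j -> I (A j)) -> I (\sum_(j <- r | P j) A j).
Proof.
move=> I0 IB IA; apply: (big_rec I) => // j a Pj Ia.
by rewrite -[a]opprK -[- a]sub0r; apply IB; [exact: IA | exact: IB].
Qed.

Section GroupAlgebra.
Variables (F : fieldType) (gT : finGroupType) (G : {group gT}).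
Implicit Types (a b c : {ffun gT -> F}) (g h : gT).
Local Notation mul := (ga_mul G).
Local Notation d := (ga_elt F).
Local Notation FG := (@in_FG F gT G).

Definition ga_scale (z : F) a : {ffun gT -> F} := [ffun g => z * a g].

Lemma ga_scale0 a : ga_scale 0 a = 0.
Proof. by apply/ffunP=> g; rewrite !ffunE mul0r. Qed.

Lemma ga_scaleDl z1 z2 a : ga_scale (z1 + z2) a = ga_scale z1 a + ga_scale z2 a.
Proof. by apply/ffunP=> g; rewrite !ffunE mulrDl. Qed.

Lemma ga_mulE a b g : mul a b g = \sum_(h in G) a h * b (h^-1 * g)%g.
Proof. by rewrite ffunE. Qed.

Lemma ga_mulDl a b c : mul (a + b) c = mul a c + mul b c.
Proof.
by apply/ffunP=> g; rewrite !ffunE -big_split; apply: eq_bigr => h _; rewrite ffunE mulrDl.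
Qed.

Lemma ga_mulDr a b c : mul a (b + c) = mul a b + mul a c.
Proof.
by apply/ffunP=> g; rewrite !ffunE -big_split; apply: eq_bigr => h _; rewrite ffunE mulrDr.
Qed.

Lemma ga_mulBl a b c : mul (a - b) c = mul a c - mul b c.
Proof.
by apply/ffunP=> g; rewrite !ffunE -sumrB; apply: eq_bigr => h _; rewrite !ffunE mulrBl.
Qed.

Lemma ga_mulBr a b c : mul a (b - c) = mul a b - mul a c.
Proof.
by apply/ffunP=> g; rewrite !ffunE -sumrB; apply: eq_bigr => h _; rewrite !ffunE mulrBr.
Qed.

Lemma ga_mul0l a : mul 0 a = 0.
Proof. by apply/ffunP=> g; rewrite !ffunE big1 // => h _; rewrite ffunE mul0r. Qed.

Lemma ga_mul0r a : mul a 0 = 0.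
Proof. by apply/ffunP=> g; rewrite !ffunE big1 // => h _; rewrite ffunE mulr0. Qed.

Lemma ga_mulZl z a b : mul (ga_scale z a) b = ga_scale z (mul a b).
Proof.
by apply/ffunP=> g; rewrite !ffunE mulr_sumr; apply: eq_bigr => h _; rewrite ffunE mulrA.
Qed.

Lemma ga_mulZr z a b : mul a (ga_scale z b) = ga_scale z (mul a b).
Proof.
by apply/ffunP=> g; rewrite !ffunE mulr_sumr; apply: eq_bigr => h _; rewrite !ffunE mulrCA.
Qed.

Lemma ga_mul_suml (J : Type) (r : seq J) (P : pred J) (A : J -> {ffun gT -> F}) b :
  mul (\sum_(j <- r | P j) A j) b = \sum_(j <- r | P j) mul (A j) b.
Proof. by elim/big_rec2: _ => [|j a1 a2 _ <-]; rewrite ?ga_mul0l ?ga_mulDl. Qed.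

Lemma ga_mul_sumr (J : Type) (r : seq J) (P : pred J) (A : J -> {ffun gT -> F}) b :
  mul b (\sum_(j <- r | P j) A j) = \sum_(j <- r | P j) mul b (A j).
Proof. by elim/big_rec2: _ => [|j a1 a2 _ <-]; rewrite ?ga_mul0r ?ga_mulDr. Qed.

Lemma ga_mulA a b c : mul (mul a b) c = mul a (mul b c).
Proof.
apply/ffunP=> g; rewrite !ga_mulE.
under eq_bigr do rewrite ga_mulE big_distrl /=.
rewrite exchange_big /=; apply: eq_bigr => k Gk.
rewrite ga_mulE big_distrr /= (reindex_inj (mulgI k)) /=.
apply: eq_big => [l|l _]; first by rewrite groupMl.
by rewrite mulKg invMg -mulgA mulrA.
Qed.

Lemma ga_mul_eltl h a : h \in G -> mul (d h) a = [ffun g => a (h^-1 * g)%g].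
Proof.
move=> Gh; apply/ffunP=> g; rewrite ga_mulE ffunE (bigD1 h) //= big1 => [|k /andP[_ nkh]].
  by rewrite ffunE eqxx mul1r addr0.
by rewrite ffunE (negPf nkh) mul0r.
Qed.

Lemma ga_mul_eltr h a : h \in G -> FG a -> mul a (d h) = [ffun g => a (g * h^-1)%g].
Proof.
move=> Gh FGa; apply/ffunP=> g; rewrite ga_mulE ffunE.
have eq_h k : ((k^-1 * g)%g == h) = (k == g * h^-1)%g.
  by apply/eqP/eqP=> [<- | ->]; rewrite invMg invgK ?mulKVg // mulgKV.
have [Ggh | nGgh] := boolP (g * h^-1 \in G)%g.
  rewrite (bigD1 (g * h^-1)%g) //= big1 => [|k /andP[_ nkh]].
    by rewrite ffunE eq_h eqxx mulr1 addr0.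
  by rewrite ffunE eq_h (negPf nkh) mulr0.
rewrite FGa // big1 // => k Gk; rewrite ffunE eq_h.
by case: eqP => [e | _]; [rewrite -e Gk in nGgh | rewrite mulr0].
Qed.

Lemma ga_mul_elt g h : g \in G -> mul (d g) (d h) = d (g * h)%g.
Proof.
move=> Gg; rewrite ga_mul_eltl //; apply/ffunP=> k; rewrite !ffunE.
suff -> : (g^-1 * k == h)%g = (k == g * h)%g by [].
by apply/eqP/eqP=> [<- | ->]; rewrite ?mulKVg ?mulKg.
Qed.

Lemma ga_mul_scale1 z a : mul (ga_scale z (d 1%g)) a = ga_scale z a.
Proof. by rewrite ga_mulZl ga_mul_eltl //; apply/ffunP=> g; rewrite !ffunE invg1 mul1g. Qed.

Lemma in_FG0 : FG 0.
Proof. by move=> g _; rewrite ffunE. Qed.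

Lemma in_FGB a b : FG a -> FG b -> FG (a - b).
Proof. by move=> FGa FGb g nGg; rewrite !ffunE FGa // FGb // subr0. Qed.

Lemma in_FGZ z a : FG a -> FG (ga_scale z a).
Proof. by move=> FGa g nGg; rewrite ffunE FGa ?mulr0. Qed.

Lemma in_FG_elt g : g \in G -> FG (d g).
Proof. by move=> Gg h nGh; rewrite ffunE; case: eqP => // eq_hg; rewrite eq_hg Gg in nGh. Qed.

Lemma in_FG_mul a b : FG b -> FG (mul a b).
Proof.
move=> FGb g nGg; rewrite ga_mulE big1 // => h Gh.
by rewrite FGb ?mulr0 // groupMl ?groupV.
Qed.

Lemma in_FG_ideal : is_ideal_of FG mul FG.
Proof.
split=> //; [exact: in_FG0 | exact: in_FGB |].
by move=> r a FGr FGa; split; apply: in_FG_mul.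
Qed.

Definition ga_reduced (A : {set gT}) : Prop :=
  forall c, (forall g, g \notin A -> c g = 0) ->
  forall n, prodn mul (fun _ => c) n = 0 -> c = 0.

End GroupAlgebra.

Section RelativeAugmentation.
Variables (F : fieldType) (gT : finGroupType) (G H : {group gT}).
Hypotheses (sHG : H \subset G) (nHG : G \subset 'N(H)%g).
Implicit Types (a b : {ffun gT -> F}) (g h : gT).
Local Notation mul := (ga_mul G).
Local Notation d := (ga_elt F).
Local Notation FG := (@in_FG F gT G).

Definition ga_sum (A : {set gT}) : {ffun gT -> F} := \sum_(h in A) d h.

Lemma ga_sumE g : ga_sum H g = (g \in H)%:R.
Proof.
rewrite sum_ffunE; have [Hg | nHg] := boolP (g \in H).
  rewrite (bigD1 g) //= big1 => [|h /andP[_ nhg]]; first by rewrite ffunE eqxx addr0.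
  by rewrite ffunE eq_sym (negPf nhg).
by rewrite big1 // => h Hh; rewrite ffunE; case: eqP => // eq_gh; rewrite eq_gh Hh in nHg.
Qed.

Lemma ga_mul_sumE a g : FG a -> mul a (ga_sum H) g = \sum_(h in H) a (g * h^-1)%g.
Proof.
move=> FGa; rewrite ga_mul_sumr sum_ffunE; apply: eq_bigr => h Hh.
by rewrite ga_mul_eltr ?ffunE // (subsetP sHG).
Qed.

Lemma ga_sum_mulE a g : mul (ga_sum H) a g = \sum_(h in H) a (h^-1 * g)%g.
Proof.
rewrite ga_mul_suml sum_ffunE; apply: eq_bigr => h Hh.
by rewrite ga_mul_eltl ?ffunE // (subsetP sHG).
Qed.

Lemma ga_sum_central a : FG a -> mul a (ga_sum H) = mul (ga_sum H) a.
Proof.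
move=> FGa; apply/ffunP=> g; rewrite ga_mul_sumE // ga_sum_mulE.
have [Gg | nGg] := boolP (g \in G); last first.
  have Gh h : h \in H -> (h^-1 \in G)%g by move=> Hh; rewrite groupV (subsetP sHG).
  rewrite !big1 // => h Hh; rewrite FGa //; first by rewrite groupMl ?Gh.
  by rewrite groupMr ?Gh.
have nHg : (g^-1 \in 'N(H))%g by rewrite (subsetP nHG) ?groupV.
rewrite [RHS](reindex_inj (conjg_inj g^-1%g)) /=.
apply: eq_big => [h | h _]; first by rewrite memJ_norm.
by rewrite -conjVg conjgE invgK !mulgA mulgKV.
Qed.

Lemma ga_mul_elt_sum h : h \in H -> mul (d h) (ga_sum H) = ga_sum H.
Proof.
move=> Hh; rewrite ga_mul_eltl ?(subsetP sHG) //; apply/ffunP=> g.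
by rewrite ffunE !ga_sumE groupMl ?groupV.
Qed.

Definition ann_sum a : Prop := FG a /\ mul a (ga_sum H) = 0.

Lemma ann_sum_ideal : is_ideal_of FG mul ann_sum.
Proof.
split=> [a [] // | | a b [FGa ann_a] [FGb ann_b] | r a FGr [FGa ann_a]].
- by split; [exact: in_FG0 | exact: ga_mul0l].
- by split; [exact: in_FGB | rewrite ga_mulBl ann_a ann_b subr0].
split; split; try exact: in_FG_mul.
  by rewrite ga_mulA ann_a ga_mul0r.
by rewrite ga_mulA ga_sum_central // -ga_mulA ann_a ga_mul0l.
Qed.

Lemma Delta_sub_ann_sum a : Delta G H a -> ann_sum a.
Proof.
apply; first exact: ann_sum_ideal.
move=> h Hh; split; first by apply: in_FGB; apply: in_FG_elt; rewrite ?(subsetP sHG).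
by rewrite ga_mulBl !ga_mul_elt_sum ?subrr.
Qed.

Lemma Delta_ideal : is_ideal_of FG mul (Delta G H).
Proof.
split.
- move=> a; apply; first exact: in_FG_ideal.
  by move=> h Hh; apply: in_FGB; apply: in_FG_elt; rewrite ?(subsetP sHG).
- by move=> I [].
- move=> a b Da Db I idI genI; have [_ _ IB _] := idI.
  by apply: IB; [apply: Da | apply: Db].
move=> r a FGr Da; split=> I idI genI; have [_ _ _ IM] := idI;
  by have [] := IM r a FGr (Da I idI genI).
Qed.

Hypothesis nzH : (#|H|%:R : F) != 0.

Definition Delta_one : {ffun gT -> F} := d 1%g - ga_scale (#|H|%:R^-1) (ga_sum H).

Lemma mem_Delta_one : Delta G H Delta_one.
Proof.
have -> : Delta_one = ga_scale (- #|H|%:R^-1) (\sum_(h in H) (d h - d 1%g)).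
  rewrite sumrB sumr_const -/(ga_sum H); apply/ffunP=> g; rewrite !ffunE ffunMnE.
  by rewrite ffunE; field.
move=> I [_ I0 IB IM] genI; rewrite -(ga_mul_scale1 G).
have Isum : I (\sum_(h in H) (d h - d 1%g)) by apply: subr_closed_sum.
have FG1 : FG (ga_scale (- #|H|%:R^-1) (d 1%g)) by apply/in_FGZ/in_FG_elt.
by have [] := IM _ _ FG1 Isum.
Qed.

Lemma Delta_one_mull a : ann_sum a -> mul Delta_one a = a.
Proof.
move=> [FGa ann_a]; rewrite ga_mulBl ga_mulZl -ga_sum_central // ann_a.
by rewrite ga_mul_eltl //; apply/ffunP=> g; rewrite !ffunE invg1 mul1g mulr0 subr0.
Qed.

Lemma Delta_one_mulr a : ann_sum a -> mul a Delta_one = a.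
Proof.
move=> [FGa ann_a]; rewrite ga_mulBr ga_mulZr ann_a ga_mul_eltr //.
by apply/ffunP=> g; rewrite !ffunE invg1 mulg1 mulr0 subr0.
Qed.

End RelativeAugmentation.

Section FixedPointFreeCommutators.
Local Open Scope group_scope.
Variables (gT : finGroupType) (H : {group gT}) (g : gT).
Hypotheses (nHg : g \in 'N(H)) (fpf : 'C_H[g] = 1).

Lemma commg_inj_fpf : {in H &, injective (fun h => [~ h, g])}.
Proof.
move=> h1 h2 Hh1 Hh2 /= eq_comm; apply/eqP; rewrite eq_sym eq_mulgV1.
have conjE h : h ^ g = h * [~ h, g] by rewrite commgEl mulKVg.
have fix_h : (h2 * h1^-1) ^ g = h2 * h1^-1.
  by rewrite conjMg conjVg !conjE eq_comm invMg mulgA mulgK.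
have : h2 * h1^-1 \in 'C_H[g].
  rewrite inE groupM ?groupV //=.
  by apply/cent1P; rewrite /commute -{2}fix_h conjgE mulKVg.
by rewrite fpf => /set1gP ->.
Qed.

Lemma imset_commg_fpf : [set [~ h, g] | h in H] = H.
Proof.
apply/eqP; rewrite eqEcard card_in_imset ?leqnn ?andbT; last exact: commg_inj_fpf.
apply/subsetP=> _ /imsetP[h Hh ->].
by rewrite commgEl groupM ?groupV ?memJ_norm.
Qed.

End FixedPointFreeCommutators.

Section FrobeniusKernelAugmentation.
Variables (F : fieldType) (gT : finGroupType) (G H : {group gT}).
Hypotheses (sHG : H \subset G) (nHG : G \subset 'N(H)%g).
Hypotheses (nzH : (#|H|%:R : F) != 0) (fpf : {in G :\: H, forall g, 'C_H[g]%g = 1%g}).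
Implicit Types (a b : {ffun gT -> F}) (g h : gT).
Local Notation mul := (ga_mul G).
Local Notation d := (ga_elt F).
Local Notation FG := (@in_FG F gT G).

Definition ga_conj_sum b : {ffun gT -> F} := \sum_(h in H) mul (mul (d h) b) (d h^-1%g).

Lemma ga_conj_sumE b g : FG b -> ga_conj_sum b g = \sum_(h in H) b (g ^ h)%g.
Proof.
move=> FGb; rewrite sum_ffunE; apply: eq_bigr => h Hh.
have Gh : h \in G by rewrite (subsetP sHG).
rewrite ga_mul_eltr ?groupV //; last exact: in_FG_mul.
by rewrite ffunE ga_mul_eltl // ffunE invgK conjgE mulgA.
Qed.

Lemma ga_conj_sum1 b : FG b -> ga_conj_sum b 1%g = #|H|%:R * b 1%g.
Proof.
move=> FGb; rewrite ga_conj_sumE // (eq_bigr _ (fun h _ => congr1 b (conj1g h))).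
by rewrite sumr_const mulr_natl.
Qed.

Lemma ga_conj_sum_ann b g : ann_sum G H b -> g \notin H -> ga_conj_sum b g = 0.
Proof.
move=> [FGb ann_b] notHg; rewrite ga_conj_sumE //.
have [Gg | nGg] := boolP (g \in G); last first.
  by rewrite big1 // => h /(subsetP sHG) Gh; apply: FGb; rewrite groupJr.
have Ng : (g \in 'N(H))%g by rewrite (subsetP nHG).
have fpf_g : 'C_H[g]%g = 1%g by rewrite fpf // inE notHg Gg.
have conjE h : (g ^ h = g * [~ h, g]^-1)%g by rewrite invgR commgEl mulKVg.
under eq_bigr => h _ do rewrite conjE.
rewrite -(big_imset (fun k => b (g * k^-1)%g) (commg_inj_fpf fpf_g)) /=.
by rewrite imset_commg_fpf // -(ga_mul_sumE sHG) // ann_b ffunE.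
Qed.

Lemma Delta_ideal_mul_elt I a g : is_ideal_of (Delta G H) mul I -> I a -> g \in G ->
  I (mul (d g) a) /\ I (mul a (d g)).
Proof.
move=> [ID _ _ IM] Ia Gg; have ann_a := Delta_sub_ann_sum sHG nHG (ID a Ia).
have [_ _ _ DM] := Delta_ideal F sHG.
have [Dgu Dug] := DM _ _ (in_FG_elt F Gg) (mem_Delta_one (G := G) nzH).
split.
  by rewrite -(Delta_one_mull sHG nHG ann_a) -ga_mulA; have [] := IM _ _ Dgu Ia.
by rewrite -(Delta_one_mulr ann_a) ga_mulA; have [] := IM _ _ Dug Ia.
Qed.

Hypothesis redH : ga_reduced F G H.

Theorem Delta_semisimple : semisimple_ring (@Delta F gT G H) mul.
Proof.
move=> I idI [n nilI] a Ia; have [ID I0 IB _] := idI.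
have [FGa _] := Delta_sub_ann_sum sHG nHG (ID a Ia).
apply/ffunP=> g; rewrite ffunE.
have [Gg | nGg] := boolP (g \in G); last exact: FGa.
pose b := mul (d g^-1%g) a.
have [Ib _] := Delta_ideal_mul_elt idI Ia (groupVr Gg).
have ann_b := Delta_sub_ann_sum sHG nHG (ID b Ib).
have Ic : I (ga_conj_sum b).
  apply: subr_closed_sum => // h /(subsetP sHG) Gh.
  have [Ihb _] := Delta_ideal_mul_elt idI Ib Gh.
  by have [] := Delta_ideal_mul_elt idI Ihb (groupVr Gh).
have c0 : ga_conj_sum b = 0.
  by move: (nilI _ (fun=> Ic)); apply: redH => h; apply: ga_conj_sum_ann.
have := ga_conj_sum1 (proj1 ann_b); rewrite c0 ffunE => /esym/eqP.
rewrite mulf_eq0 (negPf nzH) /= /b ga_mul_eltl ?groupV // ffunE invgK mulg1.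
by move/eqP.
Qed.

End FrobeniusKernelAugmentation.

Lemma sum_scaleXn_exp_pchar (R : comNzRingType) (p N m : nat) (a : nat -> R) :
  p \in [pchar R] ->
  (\sum_(i < m) a i *: 'X^i) ^+ (p ^ N) = \sum_(i < m) (a i ^+ (p ^ N)) *: 'X^(i * p ^ N).
Proof.
move=> charRp; have charRXp : p \in [pchar {poly R}] by rewrite pchar_poly.
elim: N => [|N IH]; first by apply: eq_bigr => i _; rewrite !expn0 !expr1 muln1.
rewrite expnSr exprM IH -(pFrobenius_autE charRXp) rmorph_sum; apply: eq_bigr => i _.
by rewrite -!mul_polyC /= pFrobenius_autE exprMn -polyC_exp -!exprM mulnA.
Qed.

Section CyclicGroupAlgebra.
Variables (F : fieldType) (gT : finGroupType) (G : {group gT}) (x : gT).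
Hypothesis Gx : x \in G.
Implicit Types (P Q : {poly F}).
Local Notation mul := (ga_mul G).
Local Notation d := (ga_elt F).
Local Notation FG := (@in_FG F gT G).

Definition ga_horner P : {ffun gT -> F} := \sum_(i < size P) ga_scale P`_i (d (x ^+ i)%g).

Lemma ga_hornerE n P : (size P <= n)%N ->
  ga_horner P = \sum_(i < n) ga_scale P`_i (d (x ^+ i)%g).
Proof.
move=> le_Pn; rewrite /ga_horner.
rewrite (big_ord_widen n (fun i => ga_scale P`_i (d (x ^+ i)%g)) le_Pn).
rewrite big_mkcond /=; apply: eq_bigr => i _; case: ifP => // /negbT.
by rewrite -leqNgt => le_Pi; rewrite nth_default // ga_scale0.
Qed.

Lemma ga_horner0 : ga_horner 0 = 0.
Proof. by rewrite /ga_horner size_poly0 big_ord0. Qed.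

Lemma ga_hornerD P Q : ga_horner (P + Q) = ga_horner P + ga_horner Q.
Proof.
set n := maxn (size P) (size Q).
rewrite (ga_hornerE (size_polyD P Q)).
rewrite (@ga_hornerE n P) ?leq_maxl // (@ga_hornerE n Q) ?leq_maxr //.
by rewrite -big_split; apply: eq_bigr => i _; rewrite coefD ga_scaleDl.
Qed.

Lemma ga_horner_sum (I : Type) (r : seq I) (B : pred I) (A : I -> {poly F}) :
  ga_horner (\sum_(i <- r | B i) A i) = \sum_(i <- r | B i) ga_horner (A i).
Proof. by elim/big_rec2: _ => [|i P1 P2 _ <-]; rewrite ?ga_horner0 ?ga_hornerD. Qed.

Lemma ga_hornerZXn z n : ga_horner (z *: 'X^n) = ga_scale z (d (x ^+ n)%g).
Proof.
rewrite (@ga_hornerE n.+1); last by rewrite (leq_trans (size_scale_leq _ _)) // size_polyXn.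
rewrite big_ord_recr /= big1 ?add0r => [|i _]; first by rewrite coefZ coefXn eqxx mulr1.
by rewrite coefZ coefXn (ltn_eqF (ltn_ord i)) mulr0 ga_scale0.
Qed.

Lemma ga_hornerC z : ga_horner z%:P = ga_scale z (d 1%g).
Proof. by rewrite (@ga_hornerE 1) ?size_polyC_leq1 // big_ord1 coefC /= expg0. Qed.

Lemma ga_hornerMX P : ga_horner (P * 'X) = mul (ga_horner P) (d x).
Proof.
rewrite (@ga_hornerE (size P).+1); last first.
  by rewrite (leq_trans (size_polyMleq _ _)) // size_polyX addn2.
rewrite big_ord_recl coefMX eqxx ga_scale0 add0r /ga_horner ga_mul_suml.
apply: eq_bigr => i _; rewrite coefMX /= ga_mulZl ga_mul_elt ?groupX // -expgSr.
by rewrite /bump leq0n.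
Qed.

Lemma in_FG_ga_horner P : FG (ga_horner P).
Proof.
move=> g nGg; rewrite /ga_horner sum_ffunE big1 // => i _; rewrite !ffunE.
by case: eqP => [eq_g | _]; [rewrite eq_g groupX in nGg | rewrite mulr0].
Qed.

Lemma ga_hornerM P Q : ga_horner (P * Q) = mul (ga_horner P) (ga_horner Q).
Proof.
elim/poly_ind: Q => [|Q z IH]; first by rewrite mulr0 ga_horner0 ga_mul0r.
rewrite mulrDr mulrA !ga_hornerD !ga_hornerMX IH ga_mulA ga_mulDr; congr (_ + _).
rewrite ga_hornerC ga_mulZr ga_mul_eltr //; last exact: in_FG_ga_horner.
rewrite mulrC mul_polyC (@ga_hornerE (size P)) ?size_scale_leq //.
apply/ffunP=> g; rewrite !ffunE invg1 mulg1 !sum_ffunE mulr_sumr.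
by apply: eq_bigr => i _; rewrite !ffunE coefZ mulrA.
Qed.

Lemma ga_horner_prodn P n : prodn mul (fun _ => ga_horner P) n = ga_horner (P ^+ n.+1).
Proof. by elim: n => [|n IH] /=; rewrite ?expr1 // IH -ga_hornerM -exprSr. Qed.

Lemma ga_sum_cycle_coef (z : gT) (m j : nat) (f : nat -> F) : #[z]%g = m -> (j < m)%N ->
  (\sum_(i < m) ga_scale (f i) (d (z ^+ i)%g)) (z ^+ j)%g = f j.
Proof.
move=> oz lt_jm; subst m.
rewrite sum_ffunE (bigD1 (Ordinal lt_jm)) //= big1 => [|i /negPf nij].
  by rewrite !ffunE eqxx mulr1 addr0.
by rewrite !ffunE -[j]/(nat_of_ord (Ordinal lt_jm)) eq_expg_ord // eq_sym nij mulr0.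
Qed.

Variable p : nat.
Hypotheses (charFp : p \in [pchar F]) (coprime_xp : coprime #[x]%g p).

Lemma ga_reduced_cycle : ga_reduced F G <[x]>%g.
Proof.
move=> c supp n nil_c.
pose P := \sum_(i < #[x]%g) c (x ^+ i)%g *: 'X^i.
have cE : c = ga_horner P.
  rewrite ga_horner_sum; under eq_bigr do rewrite ga_hornerZXn.
  apply/ffunP => g; have [/cyclePmin[j lt_j ->] | nxg] := boolP (g \in <[x]>%g).
    by rewrite (ga_sum_cycle_coef (fun i => c (x ^+ i)%g)).
  rewrite supp // sum_ffunE big1 // => i _; rewrite !ffunE.
  by case: eqP => [eq_g | _]; [rewrite eq_g mem_cycle in nxg | rewrite mulr0].
pose q := (p ^ n.+1)%N.
have le_nq : (n.+1 <= q)%N := ltnW (ltn_expl _ (prime_gt1 (pcharf_prime charFp))).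
pose z := (x ^+ q)%g.
have ozx : #[z]%g = #[x]%g by rewrite orderXgcd (eqP (coprimeXr _ coprime_xp)) divn1.
have Pq0 : ga_horner (P ^+ q) = 0.
  by rewrite -(subnKC le_nq) exprD ga_hornerM -ga_horner_prodn -cE nil_c ga_mul0l.
have sum0 : \sum_(i < #[x]%g) ga_scale (c (x ^+ i)%g ^+ q) (d (z ^+ i)%g) = 0.
  rewrite -[RHS]Pq0 (@sum_scaleXn_exp_pchar _ p n.+1 _ (fun i => c (x ^+ i)%g)) //.
  by rewrite ga_horner_sum; apply: eq_bigr => i _; rewrite ga_hornerZXn -expgM mulnC.
apply/ffunP => g; rewrite ffunE.
have [/cyclePmin[j lt_j ->] | nxg] := boolP (g \in <[x]>%g); last exact: supp.
have /eqP := congr1 (fun f : {ffun gT -> F} => f (z ^+ j)%g) sum0.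
rewrite /= (ga_sum_cycle_coef (fun i => c (x ^+ i)%g ^+ q)) // ffunE.
by rewrite expf_eq0 => /andP[_ /eqP].
Qed.

End CyclicGroupAlgebra.

Section MetacyclicCentralizers.
Local Open Scope group_scope.
Variable gT : finGroupType.
Implicit Types (H : {group gT}) (x y : gT).

Lemma cent1_cycle_conjX x y t : x ^ y = x ^+ t -> coprime #[x] (t - 1) -> 'C_<[x]>[y] = 1.
Proof.
move=> xy cop; apply/trivgP/subsetP=> _ /setIP[/cycleP[i ->] /cent1P cxy].
have /eqP : x ^+ (t * i) = x ^+ i by rewrite expgM -xy -conjXg conjgE cxy mulKg.
rewrite eq_expg_mod_order => fix_i.
have dvd_i : (#[x] %| i)%N.
  case: t {xy} cop fix_i => [|t] cop fix_i.
    by move: cop; rewrite /coprime gcdn0 => /eqP->.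
  rewrite subn1 /= in cop; rewrite -(Gauss_dvdr _ cop).
  by rewrite mulSn -{3}[i]addn0 eqn_modDl mod0n in fix_i.
by rewrite -expg_mod_order (eqP dvd_i) inE.
Qed.

Lemma cent1_mul_cycle_prime H y : abelian H -> prime #[y] -> 'C_H[y] = 1 ->
  {in H * <[y]> :\: H, forall g, 'C_H[g] = 1}.
Proof.
move=> cHH pr_y Cy1 _ /setDP[/mulsgP[h _ Hh /cycleP[j ->] ->] notHg].
apply/trivgP/subsetP=> k /setIP[Hk cgk]; rewrite -Cy1 inE Hk /=.
have Cyj : y ^+ j \in 'C[k].
  rewrite -(mulKg h (y ^+ j)) groupM ?groupV // cent1C //.
  by apply/cent1P; apply: (centsP cHH).
have gen_yj : generator <[y]> (y ^+ j).
  rewrite generator_coprime prime_coprime // order_dvdn.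
  by apply: contra notHg => /eqP->; rewrite mulg1.
have /cycleP[i ->] : y \in <[y ^+ j]> by rewrite -(eqP gen_yj) cycle_id.
by rewrite cent1C groupX.
Qed.

End MetacyclicCentralizers.

Theorem proposition3p10 (F : finFieldType) (k t : nat) (gT : finGroupType)
    (G H : {group gT}) (x y : gT) :
  (3%N \in [pchar F])%R ->
  (t ^ 3 = 1 %[mod 3 * k + 1])%N ->
  coprime (3 * k + 1) (t - 1) ->
  G :=: <<[set x; y]>>%g ->
  #[x]%g = (3 * k + 1)%N ->
  #[y]%g = 3%N ->
  (x ^ y = x ^+ t)%g ->
  #|G| = (3 * (3 * k + 1))%N ->
  H :=: <[x]>%g ->
  semisimple_ring (@Delta F gT G H) (@ga_mul F gT G).
Proof.
move=> char3 _ cop_t defG ox oy xy oG defH.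
have Gx : x \in G by rewrite defG mem_gen // !inE eqxx.
have Gy : y \in G by rewrite defG mem_gen // !inE eqxx orbT.
have sHG : H \subset G by rewrite defH cycle_subG.
have nHG : G \subset 'N(H)%g.
  rewrite defG defH gen_subG; apply/subsetP=> z; rewrite !inE => /orP[]/eqP->.
    by rewrite -cycleJ conjgE mulKg.
  by rewrite -cycleJ xy cycle_subG mem_cycle.
have cop3 : coprime #[x]%g 3.
  by rewrite ox coprime_sym prime_coprime // dvdn_addr ?dvdn_mulr.
have nzH : (#|H|%:R : F) != 0.
  by rewrite defH -orderE ox natrD natrM (pcharf0 char3) mul0r add0r oner_neq0.
have defHy : (H * <[y]>)%g = G.
  apply/eqP; rewrite eqEcard mulG_subG sHG cycle_subG Gy TI_cardMg /=.
    by rewrite oG defH -!orderE ox oy mulnC.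
  by apply: coprime_TIg; rewrite defH -!orderE oy.
apply: Delta_semisimple => //; last by rewrite defH; apply: ga_reduced_cycle char3 cop3.
rewrite -defHy; apply: cent1_mul_cycle_prime; first by rewrite defH cycle_abelian.
  by rewrite oy.
by rewrite defH; apply: cent1_cycle_conjX xy _; rewrite ox.
Qed.
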